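(* Let $q\in\mathrm{prob}(\{0,1\}^2)$. The set $B_\le:=\{(\pi_1,\chi^{(1)}_{1|1},\chi^{(2)}_{1|1}):(\pi,\chi)\in\Theta_2,\ \mu(\pi,\chi)=q,\ \chi^{(1)}_{0|0}\le\chi^{(2)}_{0|0}\}$ is nonempty and equals the set of all $(\mathrm{Pr},\mathrm{Se}_1,\mathrm{Se}_2)\in[0,1]^3$ satisfying $-q_{00}\le\mathrm{Pr}(\mathrm{Se}_1+\mathrm{Se}_2-1)\le q_{11}$, $\mathrm{Pr}-q_{0+}\le\mathrm{Pr}\,\mathrm{Se}_1\le q_{1+}$, $\mathrm{Pr}-q_{+0}\le\mathrm{Pr}\,\mathrm{Se}_2\le q_{+1}$, and $q_{01}-q_{10}\le\mathrm{Pr}(\mathrm{Se}_2-\mathrm{Se}_1)\le q_{01}$.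
   Context: A subscript $+$ denotes summation over the replaced index. $\mathrm{prob}(\mathcal{X})$ is the set of probability densities on a finite set $\mathcal{X}$; $\mathrm{markov}(\mathcal{X},\mathcal{Y})$ the set of maps $(x,y)\mapsto p_{y|x}$ with $p_{\cdot|x}\in\mathrm{prob}(\mathcal{Y})$. $\Theta_2:=\mathrm{prob}(\{0,1\})\times\mathrm{markov}(\{0,1\},\{0,1\}^2)$, $\mu(\pi,\chi)_j:=\sum_{i=0}^1\pi_i\chi_{j|i}$ for $j\in\{0,1\}^2$, $\chi^{(1)}_{\iota|i}:=\chi_{\iota0|i}+\chi_{\iota1|i}$, $\chi^{(2)}_{\iota|i}:=\chi_{0\iota|i}+\chi_{1\iota|i}$. *)

From HB Require Import structures.
From mathcomp Require Import all_boot all_order all_algebra.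
From mathcomp Require Import reals.
Set Implicit Arguments. Unset Strict Implicit. Unset Printing Implicit Defensive.
Import Order.TTheory GRing.Theory Num.Theory.
Local Open Scope ring_scope.

(* {0,1} is encoded as bool (false = 0, true = 1); {0,1}^2 as bool * bool,
   with j = (j1, j2). *)

Definition is_prob (R : realType) (X : finType) (p : X -> R) : Prop :=
  (forall x, 0 <= p x) /\ \sum_(x : X) p x = 1.

(* markov(X,Y): maps (x,y) |-> p_{y|x}; here chi x y = chi_{y|x} *)
Definition is_markov (R : realType) (X Y : finType) (chi : X -> Y -> R) : Prop :=
  forall x, is_prob (chi x).

Definition mu (R : realType) (pi : bool -> R) (chi : bool -> bool * bool -> R)
  (j : bool * bool) : R := \sum_(i : bool) pi i * chi i j.

Definition chi1 (R : realType) (chi : bool -> bool * bool -> R) (iota i : bool) : R :=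
  chi i (iota, false) + chi i (iota, true).

Definition chi2 (R : realType) (chi : bool -> bool * bool -> R) (iota i : bool) : R :=
  chi i (false, iota) + chi i (true, iota).

Definition B_le (R : realType) (q : bool * bool -> R) (Pr Se1 Se2 : R) : Prop :=
  exists (pi : bool -> R) (chi : bool -> bool * bool -> R),
    [/\ is_prob pi, is_markov chi, (forall j, mu pi chi j = q j),
        chi1 chi false false <= chi2 chi false false &
        (Pr, Se1, Se2) = (pi true, chi1 chi true true, chi2 chi true true)].

Definition qrow (R : realType) (q : bool * bool -> R) (a : bool) : R :=
  q (a, false) + q (a, true).
Definition qcol (R : realType) (q : bool * bool -> R) (b : bool) : R :=
  q (false, b) + q (true, b).

Definition B_ineq (R : realType) (q : bool * bool -> R) (Pr Se1 Se2 : R) : Prop :=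
  [/\ 0 <= Pr <= 1, 0 <= Se1 <= 1 & 0 <= Se2 <= 1] /\
  [/\ - q (false, false) <= Pr * (Se1 + Se2 - 1) <= q (true, true),
      Pr - qrow q false <= Pr * Se1 <= qrow q true,
      Pr - qcol q false <= Pr * Se2 <= qcol q true &
      q (false, true) - q (true, false) <= Pr * (Se2 - Se1) <= q (false, true)].

(* A point of [B_le] is encoded by the joint law [x j = pi_1 chi_{j|1}] of the
   class [i = 1], which is any function with [0 <= x <= q]; then [Pr], [Pr Se1]
   and [Pr Se2] are linear in [x], and [chi^(1)_{0|0} <= chi^(2)_{0|0}] becomes
   the linear constraint [q_01 - x_01 <= q_10 - x_10].  Fixing [Pr], [Se1],
   [Se2] leaves the single free coordinate [x_11]; eliminating it (Fourier-Motzkin)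
   gives exactly the listed inequalities.  Conversely, [pi] and [chi] are
   recovered by normalizing [x] and [q - x], with an arbitrary conditional law
   on a class of mass zero. *)
From HB Require Import structures.
From mathcomp Require Import all_boot all_order all_algebra.
From mathcomp Require Import reals.
From mathcomp Require Import ring lra.
Import Order.TTheory GRing.Theory Num.Theory.
Local Open Scope ring_scope.

Lemma exists_between {R : realDomainType} (l : R) (ls us : seq R) :
  {in l :: ls & us, forall a b, a <= b} ->
  exists t, all (fun a => a <= t) (l :: ls) && all (fun b => t <= b) us.
Proof.
move=> hle; exists (foldr Num.max l ls); apply/andP; split; apply/allP.
- clear hle; elim: ls => [|c ls IH] a; first by rewrite inE => /eqP ->.
  rewrite /= le_max !inE => /or3P[/eqP->|/eqP->|ha].
  + by rewrite (IH l) ?mem_head ?orbT.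
  + by rewrite lexx.
  + by rewrite IH ?inE ?ha ?orbT.
- move=> b hb; have : all (fun a => a <= b) (l :: ls).
    by apply/allP => a ha; exact: hle.
  clear hle; elim: ls => [|c ls IH] /=; first by rewrite andbT.
  by case/and3P => hl hc hls; rewrite ge_max hc IH //= hl.
Qed.

Lemma sum_bool_pair (R : nmodType) (f : bool * bool -> R) :
  \sum_(j : bool * bool) f j =
  f (false, false) + f (false, true) + f (true, false) + f (true, true).
Proof.
rewrite (eq_bigr (fun j => f (j.1, j.2))); last by case.
rewrite -(pair_bigA _ (fun a b => f (a, b))) /= !big_bool /=.
by rewrite addrC (addrC (f (false, true))) (addrC (f (true, true))) !addrA.
Qed.

Definition bool_pair_fun {T : Type} (a b c d : T) (j : bool * bool) : T :=
  match j with
  | (false, false) => a | (false, true) => b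
  | (true, false) => c | (true, true) => d
  end.

Lemma is_prob_bool_pair_fun (R : realType) (a b c d : R) :
  0 <= a -> 0 <= b -> 0 <= c -> 0 <= d -> a + b + c + d = 1 ->
  is_prob (bool_pair_fun a b c d).
Proof. by move=> *; split; [case=> [[] []] | rewrite sum_bool_pair]. Qed.

Lemma is_prob_bernoulli (R : realType) (p : R) :
  0 <= p <= 1 -> is_prob (fun i : bool => if i then p else 1 - p).
Proof.
case/andP=> p0 p1; split; first by case; rewrite ?subr_ge0.
by rewrite big_bool /= subrKC.
Qed.

(* The fallback [d] serves as the conditional law of a class of mass zero. *)
Definition normalize {R : realType} {X : finType} (d x : X -> R) : X -> R :=
  if \sum_j x j == 0 then d else fun j => x j / \sum_j x j.

Section Normalize.
Variables (R : realType) (X : finType) (d x : X -> R).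
Hypothesis x_ge0 : forall j, 0 <= x j.

Lemma is_prob_normalize : is_prob d -> is_prob (normalize d x).
Proof.
rewrite /normalize; case: eqP => // /eqP s0 _; split => [j|].
  by rewrite divr_ge0 ?sumr_ge0.
by rewrite -mulr_suml divff.
Qed.

Lemma mass_mul_normalize j : (\sum_i x i) * normalize d x j = x j.
Proof.
rewrite /normalize; case: eqP => [s0 | /eqP s0].
  by rewrite s0 mul0r (psumr_eq0P (fun i _ => x_ge0 i) s0).
by rewrite mulrC divfK.
Qed.

End Normalize.

(* [B_le] in terms of the joint law [x j = pi_1 chi_{j|1}]. *)
Definition B_joint {R : realType} (q : bool * bool -> R) (Pr Se1 Se2 : R) : Prop :=
  [/\ 0 <= Se1 <= 1, 0 <= Se2 <= 1 &
   exists x : bool * bool -> R,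
     [/\ forall j, 0 <= x j <= q j,
         \sum_j x j = Pr,
         Pr * Se1 = x (true, false) + x (true, true),
         Pr * Se2 = x (false, true) + x (true, true) &
         q (false, true) - x (false, true) <= q (true, false) - x (true, false)]].

Lemma B_joint_of_B_le (R : realType) (q : bool * bool -> R) (Pr Se1 Se2 : R) :
  B_le q Pr Se1 Se2 -> B_joint q Pr Se1 Se2.
Proof.
case=> pi [chi [[pi_ge0 _] chiP qE]]; rewrite /chi1 /chi2 => le0 [-> -> ->].
have [chi1_ge0 /esym] := chiP true; have [chi0_ge0 _] := chiP false.
rewrite sum_bool_pair => sum1.
have q_split j : q j = pi true * chi true j + pi false * chi false j.
  by rewrite -qE /mu big_bool.
have x1_ge0 j := mulr_ge0 (pi_ge0 true) (chi1_ge0 j).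
have x0_ge0 j := mulr_ge0 (pi_ge0 false) (chi0_ge0 j).
have := chi1_ge0 (true, false); have := chi1_ge0 (true, true).
have := chi1_ge0 (false, false); have := chi1_ge0 (false, true).
move=> *; split; try (apply/andP; split; lra).
exists (fun j => pi true * chi true j); split.
- by move=> j; rewrite x1_ge0 q_split lerDl x0_ge0.
- by rewrite sum_bool_pair -!mulrDr -sum1 mulr1.
- by rewrite mulrDr.
- by rewrite mulrDr.
- rewrite !q_split !(addrC (pi true * _)) !addrK.
  by apply: ler_wpM2l; [exact: pi_ge0 | lra].
Qed.

Lemma B_le_of_B_joint (R : realType) (q : bool * bool -> R) (Pr Se1 Se2 : R) :
  is_prob q -> B_joint q Pr Se1 Se2 -> B_le q Pr Se1 Se2.
Proof.
case=> q_ge0; rewrite sum_bool_pair => sumq.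
case=> /andP[s1_ge0 s1_le1] /andP[s2_ge0 s2_le1] [x [xq sumx S1 S2 le_y]].
have x_ge0 j : 0 <= x j by case/andP: (xq j).
have y_ge0 j : 0 <= (q \- x) j by rewrite subr_ge0; case/andP: (xq j).
have sumy : \sum_j (q \- x) j = 1 - Pr.
  by rewrite sumrB sumx sum_bool_pair sumq.
have Pr01 : 0 <= Pr <= 1.
  by apply/andP; split; [rewrite -sumx | rewrite -subr_ge0 -sumy]; exact: sumr_ge0.
pose d1 := bool_pair_fun ((1 - Se1) * (1 - Se2)) ((1 - Se1) * Se2)
                         (Se1 * (1 - Se2)) (Se1 * Se2).
pose d0 := bool_pair_fun 1 0 0 (0 : R).
have d1P : is_prob d1 by apply: is_prob_bool_pair_fun;
  rewrite ?mulr_ge0 ?subr_ge0 //; ring.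
have d0P : is_prob d0 by apply: is_prob_bool_pair_fun; rewrite ?lexx ?ler01 //; ring.
exists (fun i : bool => if i then Pr else 1 - Pr).
exists (fun i : bool => if i then normalize d1 x else normalize d0 (q \- x)).
split.
- exact: is_prob_bernoulli.
- by case; apply: is_prob_normalize.
- move=> j; rewrite /mu big_bool /= -sumy -sumx.
  by rewrite !mass_mul_normalize // subrKC.
- rewrite /chi1 /chi2 /normalize /=; case: eqP => _ /=; first by rewrite lexx.
  by rewrite lerD2l ler_wpM2r // invr_ge0 sumr_ge0 // => j _; exact: y_ge0.
- rewrite /chi1 /chi2 /normalize /= sumx; case: eqP => [-> | /eqP Pr0] /=.
    by congr (_, _, _); ring.
  by rewrite -!mulrDl -S1 -S2 !(mulrC Pr) !mulfK.
Qed.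

Lemma B_joint_ineq (R : realType) (q : bool * bool -> R) (Pr Se1 Se2 : R) :
  is_prob q -> B_joint q Pr Se1 Se2 <-> B_ineq q Pr Se1 Se2.
Proof.
case=> q_ge0; rewrite sum_bool_pair => sumq.
have := q_ge0 (false, false); have := q_ge0 (false, true).
have := q_ge0 (true, false); have := q_ge0 (true, true).
rewrite /B_ineq /qrow /qcol => q11 q10 q01 q00.
split.
  case=> /andP[? ?] /andP[? ?] [x [xq]]; rewrite sum_bool_pair => sumx S1 S2 le_y.
  have := xq (false, false); have := xq (false, true).
  have := xq (true, false); have := xq (true, true).
  move=> /andP[? ?] /andP[? ?] /andP[? ?] /andP[? ?].
  by rewrite S1 S2; split; split; apply/andP; split; lra.
case=> [[/andP[Pr_ge0 Pr_le1] /andP[s1_ge0 s1_le1] /andP[s2_ge0 s2_le1]]].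
case=> /andP[i1 i2] /andP[i3 i4] /andP[i5 i6] /andP[i7 i8].
rewrite mulrBr in i7 i8.
set S1 := Pr * Se1 in i3 i4 i7 i8 *; set S2 := Pr * Se2 in i5 i6 i7 i8 *.
have S1_ge0 : 0 <= S1 by rewrite mulr_ge0.
have S2_ge0 : 0 <= S2 by rewrite mulr_ge0.
have S1_lePr : S1 <= Pr by rewrite -[leRHS]mulr1 ler_wpM2l.
have S2_lePr : S2 <= Pr by rewrite -[leRHS]mulr1 ler_wpM2l.
have S12 : Pr * (Se1 + Se2 - 1) = S1 + S2 - Pr by rewrite /S1 /S2; ring.
rewrite S12 in i1 i2.
(* [x_11 = t] must lie between the four lower and the four upper bounds. *)
have [t] := exists_between
  (0 : R) [:: S1 - q (true, false); S2 - q (false, true); S1 + S2 - Pr]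
  [:: q (true, true); S1; S2; q (false, false) + S1 + S2 - Pr]
  ltac:(move=> a b; rewrite !inE => /or4P[] /eqP-> /or4P[] /eqP->; lra).
rewrite /= !andbT => /andP[/and4P[? ? ? ?] /and4P[? ? ? ?]].
split; [by apply/andP | by apply/andP |].
exists (bool_pair_fun (Pr - S1 - S2 + t) (S2 - t) (S1 - t) t).
split=> [[[] []] | | | |] /=; rewrite ?sum_bool_pair /= ?subrK //;
  try (apply/andP; split); lra.
Qed.

Lemma B_joint_prevalence1 (R : realType) (q : bool * bool -> R) :
  is_prob q -> B_joint q 1 (qrow q true) (qcol q true).
Proof.
case=> q_ge0; rewrite sum_bool_pair => sumq.
have := q_ge0 (false, false); have := q_ge0 (false, true).
have := q_ge0 (true, false); have := q_ge0 (true, true).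
rewrite /qrow /qcol => *; split; try (apply/andP; split; lra).
by exists q; split=> [j | | | |]; rewrite ?q_ge0 ?sum_bool_pair ?mul1r ?subrr ?lexx.
Qed.

Theorem lemma8 (R : realType) (q : bool * bool -> R) (hq : is_prob q) :
  (exists Pr Se1 Se2 : R, B_le q Pr Se1 Se2) /\
  (forall Pr Se1 Se2 : R, B_le q Pr Se1 Se2 <-> B_ineq q Pr Se1 Se2).
Proof.
split=> [|Pr Se1 Se2].
  by exists 1, (qrow q true), (qcol q true); apply/B_le_of_B_joint/B_joint_prevalence1.
rewrite -B_joint_ineq //; split; [exact: B_joint_of_B_le | exact: B_le_of_B_joint].
Qed.
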